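(* Let $K$ be a field, $A$ a $K$-algebra and $X$ a set such that, for some $P\subseteq K[X^*]$, the natural morphism $\theta:K[X^*]\to A$ induces an isomorphism $K[X^*]/\langle P\rangle\to A$ (where $\langle P\rangle$ is the two-sided ideal generated by $P$). Let $Q\subseteq K[X^*]$ and $Q':=\theta(Q)$. Define the mixed set $F:=(\dashv\! Q,P)$ with tagged part $\dashv\! Q=\{\dashv\! q: q\in Q\}$ and untagged part $P$. Then there is a bijection of sets $$\frac{K[\dashv\! X^*]}{\stackrel{*}{\leftrightarrow}_F}\;\cong\;\frac{A}{\langle Q'\rangle^r},$$ where $\langle Q'\rangle^r$ is the right ideal of $A$ generated by $Q'$ and $A/\langle Q'\rangle^r$ is the set of classes under $a\sim b\iff a-b\in\langle Q'\rangle^r$.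
   Context: $X^*$ is the free monoid on $X$ (including the empty word $id$) and $K[X^*]$ the free noncommutative $K$-algebra with identity on $X$. A monoid well-ordering $>$ on $X^*$ is fixed (a well-ordering such that $m_1>m_2\Rightarrow um_1v>um_2v$ for $u,v\in X^*$); for a nonzero polynomial, $\mathtt{LT}$ is its largest term and $\mathtt{LC}$ its coefficient. Tagged polynomials: $\dashv$ is a symbol; $K[\dashv\! X^*]$ is the $K$-vector space with basis the tagged terms $\dashv\! m$ ($m\in X^*$), a right $K[X^*]$-module via $(\dashv\! m)w=\dashv\!(mw)$. For $p=\sum k_im_i\in K[X^*]$ and $w\in X^*$, $\dashv\! w\,p:=\sum k_i\dashv\!(wm_i)$ and $\dashv\! p:=\dashv\! id\,p$; tagged terms are ordered by $\dashv\! m_1>\dashv\! m_2\iff m_1>m_2$. Reduction: for a mixed set $F=(F_T,F_P)$, $F_T\subseteq K[\dashv\! X^*]$, $F_P\subseteq K[X^*]$ (zero elements ignored), $\to_F$ on $K[\dashv\! X^*]$ is: $f\to_F f-\frac{k}{\mathtt{LC}(f_i)}f_iv$ if $f_i\in F_T$, $v\in X^*$ and $\mathtt{LT}(f_i)v$ occurs in $f$ with coefficient $k\neq0$; and $f\to_F f-\frac{k}{\mathtt{LC}(f_i)}\dashv\! w\,f_i\,v$ if $f_i\in F_P$, $w,v\in X^*$ and $\dashv\!(w\,\mathtt{LT}(f_i)\,v)$ occurs in $f$ with coefficient $k\ne0$. (The paper normalizes all polynomials to be monic.) $\stackrel{*}{\leftrightarrow}_F$ is the reflexive, symmetric, transitive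 closure of $\to_F$. *)

From HB Require Import structures.
From mathcomp Require Import all_boot all_order all_algebra.
From mathcomp Require Import finmap.
From Stdlib Require Import Relations.Relation_Operators.
From Stdlib Require List.
Set Implicit Arguments. Unset Strict Implicit. Unset Printing Implicit Defensive.
Import GRing.Theory.
Local Open Scope ring_scope.
Local Open Scope fset_scope.

Section FreeAlg.
Variables (K : fieldType) (X : choiceType).

(* Words of X^* are [seq X]; the empty word [::] is id; concatenation is ++. *)

(* K[X^*]: finitely supported functions X^* -> K (coefficient of each word). *)
Definition fpoly := {fsfun seq X -> K with 0}.

(* Tagged polynomials K[-| X^*]: the coefficient of the tagged term -|m.
   As a K-vector space it has the same shape as K[X^*]; [ttag] is -|p. *)
Definition tpoly := {fsfun seq X -> K with 0}.
Definition ttag (p : fpoly) : tpoly := p.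

(* right multiplication by a word:  (f v)(u) = f(m) if u = m ++ v, else 0 *)
Definition rmulw (f : seq X -> K) (v : seq X) : seq X -> K :=
  fun u => let n := (size u - size v)%N in
           if drop n u == v then f (take n u) else 0.
Definition lmulw (w : seq X) (f : seq X -> K) : seq X -> K :=
  fun u => if take (size w) u == w then f (drop (size w) u) else 0.

Definition monoid_wellorder (gt : seq X -> seq X -> Prop) : Prop :=
  [/\ (forall m, ~ gt m m),
      (forall a b c, gt a b -> gt b c -> gt a c),
      (forall a b, a = b \/ gt a b \/ gt b a),
      well_founded (fun a b => gt b a) &
      (forall u v m1 m2, gt m1 m2 -> gt (u ++ m1 ++ v) (u ++ m2 ++ v))].

Definition is_LT (gt : seq X -> seq X -> Prop) (f : seq X -> K) (m : seq X) :=
  f m != 0 /\ forall m', f m' != 0 -> m' = m \/ gt m m'.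

Definition red_step (gt : seq X -> seq X -> Prop)
  (FT : tpoly -> Prop) (FP : fpoly -> Prop) (f g : tpoly) : Prop :=
  (exists fi m v, FT fi /\ is_LT gt fi m /\ f (m ++ v) != 0 /\
     forall u, g u = f u - (f (m ++ v) / fi m) * rmulw fi v u)
  \/
  (exists fi m w v, FP fi /\ is_LT gt fi m /\ f (w ++ m ++ v) != 0 /\
     forall u, g u = f u - (f (w ++ m ++ v) / fi m) * lmulw w (rmulw fi v) u).

Definition red_equiv gt FT FP : tpoly -> tpoly -> Prop :=
  clos_refl_sym_trans tpoly (red_step gt FT FP).

Definition in_ideal2 (P : fpoly -> Prop) (f : fpoly) : Prop :=
  exists s : seq (K * seq X * fpoly * seq X),
    (forall t, List.In t s -> P t.1.2) /\
    forall u, f u = \sum_(t <- s) t.1.1.1 * lmulw t.1.1.2 (rmulw t.1.2 t.2) u.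

Variable A : algType K.

Definition wordA (iota : X -> A) (m : seq X) : A := \prod_(x <- m) iota x.
Definition theta (iota : X -> A) (f : fpoly) : A :=
  \sum_(m <- finsupp f) f m *: wordA iota m.

Definition in_rideal (iota : X -> A) (Q : fpoly -> Prop) (a : A) : Prop :=
  exists s : seq (fpoly * A),
    (forall t, List.In t s -> Q t.1) /\ a = \sum_(t <- s) theta iota t.1 * t.2.

End FreeAlg.

Definition quot (T : Type) (R : T -> T -> Prop) : Type :=
  {C : T -> Prop | exists x, forall y, C y <-> R x y}.

From HB Require Import structures.
From mathcomp Require Import all_boot all_order all_algebra.
From mathcomp Require Import finmap.
From Stdlib Require Import Relations.Relation_Definitions Relations.Relation_Operators.
From Stdlib Require Import FunctionalExtensionality PropExtensionality ProofIrrelevance.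
From Stdlib Require List.
Import GRing.Theory.
Local Open Scope ring_scope.
Set Implicit Arguments. Unset Strict Implicit.

(* A reduction step by a tagged polynomial ⊣q changes a tagged polynomial by
   a multiple of q v, hence its θ-image by an element
   θ(q) θ(v) of the right ideal <Q'>^r; a step by p in P changes it by a
   multiple of w p v, whose θ-image is 0 since θ(p) = 0.
   Conversely, if R = w p v with p in P (or R = q v with q in Q) and
   k = w LT(p) v is its leading position, then f and f + c R both reduce at k
   to the same polynomial, so adding such multiples never leaves a
   <->*_F-class.  Using that θ is onto, every element of <Q'>^r lifts to a sum
   of multiples q v, and ker θ = <P> consists of sums of multiples w p v; so
   θ(f) = θ(g) modulo <Q'>^r forces f <->*_F g. *)

Section Quotient.
Variable T : Type.

Lemma quot_ext (R : T -> T -> Prop) (C D : quot R) :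
  (forall x, sval C x <-> sval D x) -> C = D.
Proof.
case: C D => [c Hc] [d Hd] /= CD.
have cd : c = d.
  by apply: functional_extensionality => x; apply: propositional_extensionality.
by subst d; rewrite (proof_irrelevance _ Hc Hd).
Qed.

Definition qclass (R : T -> T -> Prop) (x : T) : quot R :=
  exist _ (R x) (ex_intro _ x (fun y => iff_refl (R x y))).

Lemma quot_classP R (C : quot R) : exists x, C = qclass R x.
Proof. by case: C => [c [x cx]]; exists x; apply: quot_ext. Qed.

Lemma qclass_eq R : equivalence T R -> forall x y, R x y -> qclass R x = qclass R y.
Proof.
case=> _ Rtr Rsym x y xy; apply: quot_ext => z /=; split; last exact: Rtr.
exact/Rtr/Rsym.
Qed.

End Quotient.

Section QuotientMap.
Variables (T U : Type) (R : T -> T -> Prop) (S : U -> U -> Prop) (h : T -> U).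
Hypothesis S_equiv : equivalence U S.
Hypothesis h_rel : forall x y, R x y <-> S (h x) (h y).
Hypothesis h_onto : forall u, exists x, S (h x) u.

Definition qimage (C : quot R) (u : U) : Prop := exists2 x, sval C x & S (h x) u.
Definition qpreimage (D : quot S) (x : T) : Prop := exists2 u, sval D u & S (h x) u.

Lemma qimage_class x u : qimage (qclass R x) u <-> S (h x) u.
Proof.
case: S_equiv => Srefl Strans _; split=> [[y /h_rel]|]; first exact: Strans.
by exists x => //; apply/h_rel/Srefl.
Qed.

Lemma qpreimage_class u x : S (h x) u -> forall y, qpreimage (qclass S u) y <-> R x y.
Proof.
case: S_equiv => Srefl Strans Ssym hxu y; split=> [[v uv hyv]|/h_rel hxy].
  by apply/h_rel/(Strans _ v); [apply: Strans uv | apply: Ssym].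
by exists u; [apply: Srefl | apply: Strans hxu; apply: Ssym].
Qed.

Lemma qimage_spec C : exists u, forall v, qimage C v <-> S u v.
Proof. by have [x ->] := quot_classP C; exists (h x); apply: qimage_class. Qed.

Lemma qpreimage_spec D : exists x, forall y, qpreimage D y <-> R x y.
Proof.
have [u ->] := quot_classP D; have [x hxu] := h_onto u.
by exists x; apply: qpreimage_class.
Qed.

Definition qmap (C : quot R) : quot S := exist _ (qimage C) (qimage_spec C).
Definition qcomap (D : quot S) : quot R := exist _ (qpreimage D) (qpreimage_spec D).

Lemma qmap_class x : qmap (qclass R x) = qclass S (h x).
Proof. by apply: quot_ext; apply: qimage_class. Qed.

Lemma qcomap_class u x : S (h x) u -> qcomap (qclass S u) = qclass R x.
Proof. by move=> hxu; apply: quot_ext; apply: qpreimage_class. Qed.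

Lemma qmap_bijective : bijective qmap.
Proof.
exists qcomap => [C|D].
  have [x ->] := quot_classP C; rewrite qmap_class.
  by apply: qcomap_class; case: S_equiv.
have [u ->] := quot_classP D; have [x hxu] := h_onto u.
by rewrite (qcomap_class hxu) qmap_class; apply: qclass_eq.
Qed.

End QuotientMap.

Section FsfunZmodule.
Variables (T : choiceType) (V : zmodType).
Implicit Types (f g h : {fsfun T -> V with 0}) (S : {fset T}).

Lemma fsfun_inE S (F : T -> V) :
  (forall x, x \notin S -> F x = 0) -> [fsfun x in S => F x | 0] =1 F.
Proof. by move=> F0 x; rewrite fsfun_fun; case: ifPn => // /F0. Qed.

Definition fsfun_opp f : {fsfun T -> V with 0} := [fsfun x in finsupp f => - f x | 0].
Definition fsfun_add f g : {fsfun T -> V with 0} :=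
  [fsfun x in (finsupp f `|` finsupp g)%fset => f x + g x | 0].

Lemma fsfun_oppE f : fsfun_opp f =1 (fun x => - f x).
Proof. by apply: fsfun_inE => x /fsfun_dflt ->; rewrite oppr0. Qed.

Lemma fsfun_addE f g : fsfun_add f g =1 (fun x => f x + g x).
Proof.
apply: fsfun_inE => x; rewrite inE negb_or => /andP[/fsfun_dflt -> /fsfun_dflt ->].
by rewrite addr0.
Qed.

Lemma fsfun_addA : associative fsfun_add.
Proof. by move=> f g h; apply/fsfunP => x; rewrite !fsfun_addE addrA. Qed.

Lemma fsfun_addC : commutative fsfun_add.
Proof. by move=> f g; apply/fsfunP => x; rewrite !fsfun_addE addrC. Qed.

Lemma fsfun_add0 : left_id [fsfun] fsfun_add.
Proof. by move=> f; apply/fsfunP => x; rewrite fsfun_addE fsfun0E add0r. Qed.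

Lemma fsfun_addN : left_inverse [fsfun] fsfun_opp fsfun_add.
Proof. by move=> f; apply/fsfunP => x; rewrite fsfun_addE fsfun_oppE fsfun0E addNr. Qed.

HB.instance Definition _ := GRing.isZmodule.Build {fsfun T -> V with 0}
  fsfun_addA fsfun_addC fsfun_add0 fsfun_addN.

Lemma fsfun0 x : (0 : {fsfun T -> V with 0}) x = 0.
Proof. exact: fsfun0E. Qed.

Lemma fsfunD f g x : (f + g) x = f x + g x.
Proof. exact: fsfun_addE. Qed.

Lemma fsfunN f x : (- f) x = - f x.
Proof. exact: fsfun_oppE. Qed.

Lemma fsfunB f g x : (f - g) x = f x - g x.
Proof. by rewrite fsfunD fsfunN. Qed.

Lemma fsfun_sum (I : Type) (r : seq I) (F : I -> {fsfun T -> V with 0}) x :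
  (\sum_(i <- r) F i) x = \sum_(i <- r) F i x.
Proof. exact: (big_morph (fun f => f x) (fun f g => fsfunD f g x) (fsfun0 x)). Qed.

End FsfunZmodule.

Section FsfunLmodule.
Variables (T : choiceType) (R : pzRingType).
Implicit Types (f g : {fsfun T -> R with 0}).

Definition fsfun_scale (c : R) f : {fsfun T -> R with 0} :=
  [fsfun x in finsupp f => c * f x | 0].

Lemma fsfun_scaleE c f : fsfun_scale c f =1 (fun x => c * f x).
Proof. by apply: fsfun_inE => x /fsfun_dflt ->; rewrite mulr0. Qed.

Lemma fsfun_scaleA a b f : fsfun_scale a (fsfun_scale b f) = fsfun_scale (a * b) f.
Proof. by apply/fsfunP => x; rewrite !fsfun_scaleE mulrA. Qed.

Lemma fsfun_scale1 : left_id 1 fsfun_scale.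
Proof. by move=> f; apply/fsfunP => x; rewrite fsfun_scaleE mul1r. Qed.

Lemma fsfun_scaleDr : right_distributive fsfun_scale +%R.
Proof.
by move=> a f g; apply/fsfunP => x; rewrite fsfun_scaleE !fsfunD !fsfun_scaleE mulrDr.
Qed.

Lemma fsfun_scaleDl f : {morph fsfun_scale^~ f : a b / a + b}.
Proof. by move=> a b; apply/fsfunP => x; rewrite fsfunD !fsfun_scaleE mulrDl. Qed.

HB.instance Definition _ := GRing.Zmodule_isLmodule.Build R {fsfun T -> R with 0}
  fsfun_scaleA fsfun_scale1 fsfun_scaleDr fsfun_scaleDl.

Lemma fsfunZ c f x : (c *: f) x = c * f x.
Proof. exact: fsfun_scaleE. Qed.

End FsfunLmodule.

Lemma exists_greatest (T : eqType) (gt : T -> T -> Prop)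
    (gt_trans : forall a b c, gt a b -> gt b c -> gt a c)
    (gt_total : forall a b, a = b \/ gt a b \/ gt b a) (s : seq T) x :
  x \in s -> exists2 m, m \in s & forall m', m' \in s -> m' = m \/ gt m m'.
Proof.
elim: s x => [//|x [|y s] IH] _ _.
  by exists x => [|m']; rewrite ?mem_seq1 // => /eqP; left.
have [m ms mmax] := IH y (mem_head y s).
have [xm|[xm|mx]] := gt_total x m.
- subst m; exists x; first exact: mem_head.
  by move=> m'; rewrite in_cons => /predU1P[->|/mmax]; [left|].
- exists x; first exact: mem_head.
  move=> m'; rewrite in_cons => /predU1P[->|/mmax[->|mm']]; [by left|by right|].
  by right; apply: gt_trans xm mm'.
- exists m; first by rewrite in_cons ms orbT.
  by move=> m'; rewrite in_cons => /predU1P[->|/mmax]; [right|].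
Qed.

Section FreeAlgebra.
Variables (K : fieldType) (X : choiceType).
Implicit Types (f g p q : fpoly K X) (m u v w : seq X).

HB.instance Definition _ := GRing.Lmodule.copy (fpoly K X) {fsfun seq X -> K with 0}.

Lemma rmulw_cat (F : seq X -> K) m v : rmulw F v (m ++ v) = F m.
Proof. by rewrite /rmulw size_cat addnK drop_size_cat // take_size_cat // eqxx. Qed.

Lemma lmulw_cat w (F : seq X -> K) m : lmulw w F (w ++ m) = F m.
Proof. by rewrite /lmulw take_size_cat // drop_size_cat // eqxx. Qed.

Lemma lmulw_nil (F : seq X -> K) : lmulw [::] F =1 F.
Proof. by move=> u; rewrite /lmulw take0 drop0 eqxx. Qed.

Lemma rmulw_nil (F : seq X -> K) : rmulw F [::] =1 F.
Proof. by move=> u; rewrite /rmulw subn0 drop_size take_size eqxx. Qed.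

Lemma cat_mid_inj w v : injective (fun m => w ++ m ++ v).
Proof.
move=> m m' /eqP; rewrite eqseq_cat // eqxx /= => /eqP mv.
have sz : size m = size m' by move/(congr1 size): mv; rewrite !size_cat => /addIn.
by move/eqP: mv; rewrite eqseq_cat // eqxx andbT => /eqP.
Qed.

Definition mulw w f v : fpoly K X :=
  [fsfun u in [fset w ++ m ++ v | m in finsupp f]%fset => lmulw w (rmulw f v) u | 0].

Lemma mulwE w f v : mulw w f v =1 lmulw w (rmulw f v).
Proof.
apply: fsfun_inE => u uNS; rewrite /lmulw /rmulw.
case: eqP => // wu; case: eqP => // vu; apply: fsfun_dflt; apply: contra uNS => fm.
rewrite -(cat_take_drop (size w) u) wu.
set u' := drop _ u; rewrite -(cat_take_drop (size u' - size v) u') vu.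
by apply/imfsetP; exists (take (size u' - size v) u').
Qed.

Lemma mulw_key w f v m : mulw w f v (w ++ m ++ v) = f m.
Proof. by rewrite mulwE lmulw_cat rmulw_cat. Qed.

Lemma mulw0 w v : mulw w 0 v = 0.
Proof. by apply/fsfunP => u; rewrite mulwE /lmulw /rmulw !fsfun0 !if_same. Qed.

Lemma in_ideal2_sum (P : fpoly K X -> Prop) f : in_ideal2 P f ->
  exists2 s : seq (K * seq X * fpoly K X * seq X), (forall t, List.In t s -> P t.1.2) &
    f = \sum_(t <- s) t.1.1.1 *: mulw t.1.1.2 t.1.2 t.2.
Proof.
case=> s [Ps fE]; exists s => //; apply/fsfunP => u.
by rewrite fE fsfun_sum; apply: eq_bigr => t _; rewrite fsfunZ mulwE.
Qed.

Lemma in_ideal2_gen (P : fpoly K X -> Prop) p : P p -> in_ideal2 P p.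
Proof.
move=> Pp; exists [:: (1, [::], p, [::])]; split; first by move=> t [<-|].
by move=> u; rewrite big_seq1 mul1r lmulw_nil rmulw_nil.
Qed.

Lemma exists_LT (gt : seq X -> seq X -> Prop) (gt_wo : monoid_wellorder gt) f :
  f != 0 -> exists m, is_LT gt f m.
Proof.
case: gt_wo => _ gt_trans gt_total _ _ f0.
have [u uf] : exists u, u \in finsupp f.
  apply/fset0Pn; apply: contra f0 => /eqP supp0; apply/eqP/fsfunP => u.
  by rewrite fsfun0 fsfun_dflt // supp0.
have [m mf mmax] := exists_greatest gt_trans gt_total uf.
exists m; split=> [|m' fm']; first by rewrite -mem_finsupp.
by apply: mmax; rewrite mem_finsupp.
Qed.

End FreeAlgebra.

Section Evaluation.
Variables (K : fieldType) (X : choiceType) (A : algType K) (iota : X -> A).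
Implicit Types (f g p q : fpoly K X) (m u v w : seq X).

Lemma wordA_cat u v : wordA iota (u ++ v) = wordA iota u * wordA iota v.
Proof. exact: big_cat. Qed.

Lemma thetaE_fset f (S : {fset seq X}) : (forall m, m \notin S -> f m = 0) ->
  theta iota f = \sum_(m <- S) f m *: wordA iota m.
Proof.
move=> f0; apply: big_fset_incl => [|m _ mf]; last by rewrite fsfun_dflt ?scale0r.
by apply/fsubsetP => m; rewrite mem_finsupp; apply: contraR => /f0 ->.
Qed.

Lemma theta_is_linear : linear (theta iota).
Proof.
move=> a f g; pose S := (finsupp f `|` finsupp g)%fset.
have fS m : m \notin S -> f m = 0 by rewrite inE negb_or => /andP[/fsfun_dflt].
have gS m : m \notin S -> g m = 0 by rewrite inE negb_or => /andP[_ /fsfun_dflt].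
rewrite (thetaE_fset fS) (thetaE_fset gS) (@thetaE_fset _ S); last first.
  by move=> m mS; rewrite fsfunD fsfunZ fS ?gS // mulr0 addr0.
rewrite scaler_sumr -big_split /=; apply: eq_bigr => m _.
by rewrite fsfunD fsfunZ scalerDl scalerA.
Qed.

HB.instance Definition _ := GRing.isLinear.Build K (fpoly K X) A *:%R (theta iota)
  theta_is_linear.

Lemma theta_mulw w f v :
  theta iota (mulw w f v) = wordA iota w * theta iota f * wordA iota v.
Proof.
rewrite (@thetaE_fset _ [fset w ++ m ++ v | m in finsupp f]%fset); last first.
  by move=> u uS; rewrite /mulw fsfun_fun (negbTE uS).
rewrite big_imfset /=; last by move=> m m' _ _ /cat_mid_inj.
rewrite /theta mulr_sumr mulr_suml; apply: eq_bigr => m _.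
by rewrite mulw_key !wordA_cat -scalerAr -scalerAl mulrA.
Qed.

Lemma theta_mulw_r f v : theta iota (mulw [::] f v) = theta iota f * wordA iota v.
Proof. by rewrite theta_mulw [wordA _ [::]]big_nil mul1r. Qed.

Section RightIdeal.
Variable Q : fpoly K X -> Prop.

Lemma in_rideal0 : in_rideal iota Q 0.
Proof. by exists [::]; rewrite big_nil. Qed.

Lemma in_ridealN a : in_rideal iota Q a -> in_rideal iota Q (- a).
Proof.
case=> s [Qs ->]; exists [seq (t.1, - t.2) | t <- s]; split.
  by move=> t /List.in_map_iff [t' [<- /Qs]].
by rewrite big_map -sumrN; apply: eq_bigr => t _; rewrite mulrN.
Qed.

Lemma in_ridealD a b : in_rideal iota Q a -> in_rideal iota Q b -> in_rideal iota Q (a + b).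
Proof.
case=> s [Qs ->] [s' [Qs' ->]]; exists (s ++ s'); rewrite big_cat; split=> // t.
by move=> /(List.in_app_or s s' t) [/Qs|/Qs'].
Qed.

Lemma in_rideal_mulr q a : Q q -> in_rideal iota Q (theta iota q * a).
Proof. by move=> Qq; exists [:: (q, a)]; rewrite big_seq1; split=> // t [<-|]. Qed.

Lemma rideal_congr_equiv : equivalence A (fun a b => in_rideal iota Q (a - b)).
Proof.
split=> [a | a b c ab bc | a b ab]; first by rewrite subrr; apply: in_rideal0.
  by rewrite -[a](subrK b) -addrA; apply: in_ridealD.
by rewrite -opprB; apply: in_ridealN.
Qed.

End RightIdeal.

End Evaluation.

Section Reduction.
Variables (K : fieldType) (X : choiceType) (gt : seq X -> seq X -> Prop).
Hypothesis gt_wo : monoid_wellorder gt.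
Variables P Q : fpoly K X -> Prop.
Implicit Types (f g p q R : fpoly K X) (m u v w : seq X).

Definition tagged (t : tpoly K X) : Prop := exists q, Q q /\ t = ttag q.

Local Notation red := (red_equiv gt tagged P).
Local Notation step := (red_step gt tagged P).

Lemma red_addZ R key : R key != 0 ->
    (forall f, f key != 0 -> step f (f - (f key / R key) *: R)) ->
  forall f c, red f (f + c *: R).
Proof.
move=> Rk0 stepR f c.
pose reduct g := g - (g key / R key) *: R.
have red_reduct g : red g (reduct g).
  have [gk0|gk0] := eqVneq (g key) 0; last exact/rst_step/stepR.
  by rewrite /reduct gk0 mul0r scale0r subr0; apply: rst_refl.
have reductD : reduct (f + c *: R) = reduct f.
  by rewrite /reduct fsfunD fsfunZ mulrDl mulfK // scalerDl opprD addrACA subrr addr0.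
apply: rst_trans (red_reduct f) _; rewrite -reductD; exact/rst_sym/red_reduct.
Qed.

Definition neutral g := forall f, red f (f + g).

Lemma neutral0 : neutral 0.
Proof. by move=> f; rewrite addr0; apply: rst_refl. Qed.

Lemma neutralD g1 g2 : neutral g1 -> neutral g2 -> neutral (g1 + g2).
Proof. by move=> n1 n2 f; rewrite addrA; apply: rst_trans (n1 f) (n2 _). Qed.

Lemma neutral_sum (I : Type) (r : seq I) (F : I -> fpoly K X) :
  (forall i, List.In i r -> neutral (F i)) -> neutral (\sum_(i <- r) F i).
Proof.
elim: r => [|i r IH] nF; first by rewrite big_nil; apply: neutral0.
by rewrite big_cons; apply: neutralD; [apply: nF; left | apply: IH => j rj; apply: nF; right].
Qed.

Lemma neutral_mulw w p v :
    (forall m f, is_LT gt p m -> f (w ++ m ++ v) != 0 ->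
       step f (f - (f (w ++ m ++ v) / p m) *: mulw w p v)) ->
  forall c, neutral (c *: mulw w p v).
Proof.
move=> stepR c; have [->|p0] := eqVneq p 0; first by rewrite mulw0 scaler0; apply: neutral0.
have [m pm] := exists_LT gt_wo p0.
move=> f; apply: (@red_addZ _ (w ++ m ++ v)); rewrite mulw_key; first exact: pm.1.
by move=> g; apply: stepR.
Qed.

Lemma neutral_mulwQ q c v : Q q -> neutral (c *: mulw [::] q v).
Proof.
move=> Qq; apply: neutral_mulw => m f qm fk; left.
exists (ttag q), m, v; split; first by exists q.
by split=> //; split=> // u; rewrite fsfunB fsfunZ mulwE lmulw_nil.
Qed.

Lemma neutral_mulwP p c w v : P p -> neutral (c *: mulw w p v).
Proof.
move=> Pp; apply: neutral_mulw => m f pm fk; right.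
by exists p, m, w, v; split=> //; split=> //; split=> // u; rewrite fsfunB fsfunZ mulwE.
Qed.

Lemma neutral_ideal2 f : in_ideal2 P f -> neutral f.
Proof.
by case/in_ideal2_sum => s Ps ->; apply: neutral_sum => t /Ps; apply: neutral_mulwP.
Qed.

End Reduction.

Section Correspondence.
Variables (K : fieldType) (X : choiceType) (A : algType K) (iota : X -> A).
Variables (gt : seq X -> seq X -> Prop) (P Q : fpoly K X -> Prop).
Hypothesis gt_wo : monoid_wellorder gt.
Hypothesis theta_onto : forall a : A, exists f, theta iota f = a.
Hypothesis theta_ker : forall f, theta iota f = 0 <-> in_ideal2 P f.
Implicit Types f g : fpoly K X.

Local Notation red := (red_equiv gt (tagged Q) P).
Local Notation congr_rideal a b := (in_rideal iota Q (a - b)).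

Lemma red_step_rideal f g : red_step gt (tagged Q) P f g ->
  congr_rideal (theta iota f) (theta iota g).
Proof.
case=> [[_ [m [v [[q [Qq ->]] [_ [_ gE]]]]]] | [p [m [w [v [Pp [_ [_ gE]]]]]]]].
- set k := _ / _ in gE; have -> : g = f - k *: mulw [::] q v.
    by apply/fsfunP => u; rewrite gE fsfunB fsfunZ mulwE lmulw_nil.
  by rewrite linearB /= subKr linearZ /= theta_mulw_r scalerAr; apply: in_rideal_mulr.
- set k := _ / _ in gE; have -> : g = f - k *: mulw w p v.
    by apply/fsfunP => u; rewrite gE fsfunB fsfunZ mulwE.
  have theta_p : theta iota p = 0 by apply/theta_ker/in_ideal2_gen.
  by rewrite linearB /= subKr linearZ /= theta_mulw theta_p mulr0 mul0r scaler0; apply: in_rideal0.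
Qed.

Lemma red_rideal f g : red f g -> congr_rideal (theta iota f) (theta iota g).
Proof.
case: (rideal_congr_equiv iota Q) => refl trans sym.
elim=> {f g} [f g /red_step_rideal //|f|f g _|f g h _ fg _ gh]; first exact: refl.
  exact: sym.
exact: trans fg gh.
Qed.

Lemma rideal_lift a : in_rideal iota Q a -> exists2 g, neutral gt P Q g & theta iota g = a.
Proof.
case=> s [Qs ->] {a}; elim: s Qs => [|[q b] s IH] Qs.
  by exists 0; [apply: neutral0 | rewrite linear0 big_nil].
rewrite big_cons /=; have [g ng <-] := IH (fun t st => Qs t (or_intror st)).
have Qq : Q q := Qs _ (or_introl erefl).
have [h <-] := theta_onto b.
exists (\sum_(v <- finsupp h) h v *: mulw [::] q v + g).
  apply: neutralD => //; apply: neutral_sum => v _; exact: neutral_mulwQ.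
rewrite linearD linear_sum [theta iota h]/theta mulr_sumr /=; congr (_ + _).
by apply: eq_bigr => v _; rewrite linearZ /= theta_mulw_r scalerAr.
Qed.

Lemma rideal_red f1 f2 : congr_rideal (theta iota f1) (theta iota f2) -> red f1 f2.
Proof.
case/rideal_lift => g ng gE.
have nd : neutral gt P Q (f1 - (f2 + g)).
  by apply/(neutral_ideal2 gt_wo)/theta_ker; rewrite linearB linearD /= gE subrKC subrr.
by apply: rst_sym; apply: rst_trans (ng f2) _; have := nd (f2 + g); rewrite subrKC.
Qed.

End Correspondence.

Theorem theorem3p6 (K : fieldType) (X : choiceType) (A : algType K)
  (gt : seq X -> seq X -> Prop) (gt_wo : monoid_wellorder gt)
  (iota : X -> A) (P Q : fpoly K X -> Prop)
  (theta_surj : forall a : A, exists f, theta iota f = a)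
  (theta_ker : forall f, theta iota f = 0 <-> in_ideal2 P f) :
  exists phi : quot (red_equiv gt (fun t : tpoly K X => exists q, Q q /\ t = ttag q) P) ->
               quot (fun a b : A => in_rideal iota Q (a - b)),
    bijective phi.
Proof.
have theta_rel f g : red_equiv gt (tagged Q) P f g <->
    in_rideal iota Q (theta iota f - theta iota g).
  by split; [apply: red_rideal | apply: rideal_red].
exists (qmap (rideal_congr_equiv iota Q) theta_rel); apply: qmap_bijective => a.
by have [f <-] := theta_surj a; exists f; rewrite subrr; apply: in_rideal0.
Qed.
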